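(* Consider the ride-hailing model in the context. The optimal value of $\mathcal{OPT}$ (the optimal platform profit), viewed as a function of the AV fleet mass $M$ and of the CV fleet mass $N$ with all other parameters fixed, is non-decreasing in $M$ and non-decreasing in $N$.
   Context: Model. There are $L$ regions $\{1,\dots,L\}$. For regions $i,j$, $b_{ij}\ge0$ is the customer rate from $i$ to $j$; $b_i=\sum_j b_{ij}$ (assumed $>0$), $q_{ij}=b_{ij}/b_i$. Travel times satisfy $t_{ij}>0$ for $i\ne j$, $t_{ii}=0$. Constants: $p>0$, $c\ge0$, $R\in(0,1)$, CV fleet mass $N>0$, AV fleet mass $M\ge0$. For $i,\alpha$: $\tau^{dr}_{i\alpha}=t_{i\alpha}+\sum_j q_{\alpha j}t_{\alpha j}$, $r^A_{i\alpha}=p\sum_j q_{\alpha j}t_{\alpha j}-c\tau^{dr}_{i\alpha}$, $r^C_{i\alpha}=p(1-R)\sum_j q_{\alpha j}t_{\alpha j}-c\tau^{dr}_{i\alpha}$, $r^{C2P}_{i\alpha}=pR\sum_j q_{\alpha j}t_{\alpha j}$. A matrix $\bm x\in\mathbb R^{L\times L}_{\ge0}$ satisfies flow balance if $\sum_j(\sum_k x_{kj})q_{ji}=\sum_\alpha x_{i\alpha}$ for all $i$. $\mathcal{CV}(\bm b^C)$: maximize $N\log\sum_{i,\alpha}r^C_{i\alpha}x_{i\alpha}-\sum_{i,\alpha}\tau^{dr}_{i\alpha}x_{i\alpha}$ over $\bm x\ge0$ satisfying flow balance and $\sum_j x_{ji}\le b^C_i$ for all $i$; $\pi(\bm b^C)=\sum_{i,\alpha}r^{C2P}_{i\alpha}x_{i\alpha}$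 for an optimal solution $\bm x$ (same for all optimal solutions). $\mathcal{OPT}$: maximize $\sum_{i,\alpha}r^A_{i\alpha}x^A_{i\alpha}+\pi(\bm b^C)$ over $\bm b^C\in\mathbb R^L_{\ge0}$, $\bm x^A\in\mathbb R^{L\times L}_{\ge0}$ subject to $\sum_j x^A_{ji}+b^C_i\le b_i$ for all $i$, flow balance for $\bm x^A$, and $\sum_{i,\alpha}\tau^{dr}_{i\alpha}x^A_{i\alpha}\le M$. *)

From HB Require Import structures.
From mathcomp Require Import all_boot all_order all_algebra.
From mathcomp Require Import all_classical all_reals all_analysis.
Set Implicit Arguments. Unset Strict Implicit. Unset Printing Implicit Defensive.
Import Order.TTheory GRing.Theory Num.Theory.
Local Open Scope ring_scope.
Local Open Scope classical_set_scope.

Section RideHailing.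
Variables (R : realType) (L : nat).
Variables (b t : 'I_L -> 'I_L -> R) (p c Rc : R).

Definition brate (i : 'I_L) : R := \sum_(j < L) b i j.
Definition qm (i j : 'I_L) : R := b i j / brate i.
Definition trip_len (a : 'I_L) : R := \sum_(j < L) qm a j * t a j.
Definition tau_dr (i a : 'I_L) : R := t i a + trip_len a.
Definition rA (i a : 'I_L) : R := p * trip_len a - c * tau_dr i a.
Definition rC (i a : 'I_L) : R := p * (1 - Rc) * trip_len a - c * tau_dr i a.
Definition rC2P (i a : 'I_L) : R := p * Rc * trip_len a.

Definition lsum (w x : 'I_L -> 'I_L -> R) : R :=
  \sum_(i < L) \sum_(a < L) w i a * x i a.

Definition flow_balance (x : 'I_L -> 'I_L -> R) : Prop :=
  forall i : 'I_L,
    \sum_(j < L) (\sum_(k < L) x k j) * qm j i = \sum_(a < L) x i a.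

Definition nonneg_mx (x : 'I_L -> 'I_L -> R) : Prop :=
  forall i a, 0 <= x i a.

Definition cv_feasible (bC : 'I_L -> R) (x : 'I_L -> 'I_L -> R) : Prop :=
  nonneg_mx x /\ flow_balance x /\ forall i, \sum_(j < L) x j i <= bC i.

(* objective of CV(b^C); log of a nonpositive number is taken as -oo *)
Definition cv_obj (N : R) (x : 'I_L -> 'I_L -> R) : \bar R :=
  let S := lsum rC x in
  if 0 < S then (N * ln S - lsum tau_dr x)%:E else -oo%E.

Definition cv_optimal (N : R) (bC : 'I_L -> R) (x : 'I_L -> 'I_L -> R) : Prop :=
  cv_feasible bC x /\
  forall y, cv_feasible bC y -> (cv_obj N y <= cv_obj N x)%E.

Definition opt_feasible (M : R) (bC : 'I_L -> R) (xA : 'I_L -> 'I_L -> R) : Prop :=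
  (forall i, 0 <= bC i) /\ nonneg_mx xA /\
  (forall i, \sum_(j < L) xA j i + bC i <= brate i) /\
  flow_balance xA /\ lsum tau_dr xA <= M.

(* optimal value of OPT: pi(b^C) = sum r^{C2P} x over an optimal x of CV(b^C) *)
Definition opt_value (M N : R) : \bar R :=
  ereal_sup [set v : \bar R | exists bC xA xC,
     opt_feasible M bC xA /\ cv_optimal N bC xC /\
     v = (lsum rA xA + lsum rC2P xC)%:E].
End RideHailing.

From HB Require Import structures.
From mathcomp Require Import all_boot all_order all_algebra.
From mathcomp Require Import all_classical all_reals all_analysis.
From mathcomp Require Import ring lra.
Set Implicit Arguments. Unset Strict Implicit. Unset Printing Implicit Defensive.
Import Order.TTheory GRing.Theory Num.Theory.
Import numFieldNormedType.Exports.
Local Open Scope classical_set_scope.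
Local Open Scope ring_scope.

(* Raising M only enlarges the feasible set of OPT.  For N, the CV subproblem
   maximises N ln S(x) - T(x), with S the CV revenue and T the driving time.
   Adding the optimality inequalities of x1 (for N1) and x2 (for N2 > N1) gives
   (N2 - N1) (ln S(x2) - ln S(x1)) >= 0, so S does not decrease, and then the
   optimality of x1 shows that T does not decrease either.  The commission is
   Rc / (1 - Rc) (S + c T), an identity that holds term by term, so it does not
   decrease.  A maximiser x2 exists since the CV feasible set is compact: every
   flow is bounded by the capacities b^C. *)

Section ClosedSets.
Variables (R : realType) (T : topologicalType).
Implicit Types f g : T -> R.

Lemma continuous_sumr (I : Type) (r : seq I) (F : I -> T -> R) :
  (forall i, continuous (F i)) -> continuous (fun v => \sum_(i <- r) F i v).
Proof. by move=> cF; apply: continuous_big => //; exact: add_continuous. Qed.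

Lemma closed_le_fun f g : continuous f -> continuous g -> closed [set v | f v <= g v].
Proof.
move=> cf cg; rewrite (_ : mkset _ = (g \- f) @^-1` [set x | 0 <= x]).
  apply: preimage_closed; last exact: closed_ge.
  by move=> x _; exact: continuousB (cg x) (cf x).
by apply/seteqP; split => v /=; rewrite subr_ge0.
Qed.

Lemma closed_eq_fun f g : continuous f -> continuous g -> closed [set v | f v = g v].
Proof.
move=> cf cg; rewrite (_ : mkset _ = [set v | f v <= g v] `&` [set v | g v <= f v]).
  by apply: closedI; exact: closed_le_fun.
by apply/seteqP; split => v /= => [->|[fg gf]]; last apply/le_anti; rewrite ?fg ?gf.
Qed.

Lemma closed_forall (I : Type) (P : I -> set T) :
  (forall i, closed (P i)) -> closed [set v | forall i, P i v].
Proof.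
move=> cP; rewrite (_ : mkset _ = \bigcap_(i in setT) P i); first exact: closed_bigI.
by apply/seteqP; split => v /= vP i //; exact: vP.
Qed.

End ClosedSets.

Section LnObjective.
Variables (R : realType) (T : topologicalType).

Lemma ln_objective_attains_max (K : set T) (N : R) (S U : T -> R) x0 :
  compact K -> continuous S -> continuous U -> 0 < N ->
  (forall x, K x -> 0 <= U x) -> K x0 -> 0 < S x0 ->
  exists2 x, K x & 0 < S x /\
    forall y, K y -> 0 < S y -> N * ln (S y) - U y <= N * ln (S x) - U x.
Proof.
move=> cK cS cU N_gt0 U_ge0 Kx0 Sx0.
set d := expR ((N * ln (S x0) - U x0 - 1) / N).
have d_gt0 : 0 < d := expR_gt0 _.
have lnd : N * ln d = N * ln (S x0) - U x0 - 1.
  by rewrite expRK mulrC divfK ?gt_eqF.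
have dSx0 : d <= S x0.
  by rewrite -ler_ln ?posrE // -(ler_pM2l N_gt0) lnd; have := U_ge0 _ Kx0; lra.
(* [ln] is only continuous on positive reals; flooring [S] at [d] makes the
   objective continuous, and [d] is too small to affect the maximiser. *)
pose phi x := N * ln (Num.max (S x) d) - U x.
have cphi : continuous phi.
  move=> x; apply: (@continuousB _ _ _ (fun x => N * ln (Num.max (S x) d)) U).
    apply: (@continuousM _ _ (fun=> N)); first exact: cst_continuous.
    apply: (@continuous_comp _ _ _ (fun x => Num.max (S x) d)).
      exact: (@continuous_max _ _ S (fun=> d) x (cS x) (@cst_continuous _ _ d x)).
    by apply: continuous_ln; rewrite lt_max d_gt0 orbT.
  exact: cU.
have [x /set_mem Kx xmax] :=
  compact_EVT_max (ex_intro _ x0 Kx0) cK (continuous_subspaceT cphi).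
have dSx : d <= S x.
  rewrite leNgt; apply/negP => Sxd; have := xmax _ (mem_set Kx0).
  by rewrite /phi (max_l dSx0) (max_r (ltW Sxd)) lnd; have := U_ge0 _ Kx; lra.
exists x => //; split=> [|y Ky Sy]; first exact: lt_le_trans dSx.
have -> : N * ln (S x) - U x = phi x by rewrite /phi max_l.
apply: le_trans (xmax _ (mem_set Ky)).
by rewrite lerD2r ler_pM2l // ler_ln ?posrE ?le_max ?lexx // lt_max Sy.
Qed.

Lemma ln_objective_maximisers_mono (N1 N2 s1 s2 u1 u2 : R) :
  0 < N1 -> N1 < N2 -> 0 < s1 -> 0 < s2 ->
  N1 * ln s2 - u2 <= N1 * ln s1 - u1 -> N2 * ln s1 - u1 <= N2 * ln s2 - u2 ->
  s1 <= s2 /\ u1 <= u2.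
Proof.
move=> N1_gt0 N12 s1_gt0 s2_gt0 opt1 opt2.
have ln12 : ln s1 <= ln s2 by nra.
by split; [rewrite -ler_ln ?posrE | nra].
Qed.

End LnObjective.

Section FlowVectors.
Variables (R : realType) (L : nat).
Implicit Types (w x : 'I_L -> 'I_L -> R) (v : 'rV[R]_(L * L)).

Definition fun_of_vec v (i a : 'I_L) : R := v ord0 (mxvec_index i a).
Definition vec_of_fun x : 'rV[R]_(L * L) := mxvec (\matrix_(i, a) x i a).

Lemma vec_of_funK : cancel vec_of_fun fun_of_vec.
Proof.
by move=> x; apply/funext => i; apply/funext => a; rewrite /fun_of_vec mxvecE mxE.
Qed.

Lemma continuous_fun_of_vec i a : continuous (fun v => fun_of_vec v i a).
Proof. exact: coord_continuous. Qed.

Lemma continuous_lsum w : continuous (fun v => lsum w (fun_of_vec v)).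
Proof.
apply: continuous_sumr => i; apply: continuous_sumr => a v.
by apply: continuousM; [exact: cst_continuous | exact: continuous_fun_of_vec].
Qed.

Lemma lsum_ge0 w x : nonneg_mx w -> nonneg_mx x -> 0 <= lsum w x.
Proof. by move=> w0 x0; do 2!apply: sumr_ge0 => ? _; exact: mulr_ge0. Qed.

Lemma lsumD w1 w2 x : lsum (fun i a => w1 i a + w2 i a) x = lsum w1 x + lsum w2 x.
Proof.
rewrite /lsum -big_split; apply: eq_bigr => i _.
by rewrite -big_split; apply: eq_bigr => a _; rewrite mulrDl.
Qed.

Lemma lsumZ k w x : lsum (fun i a => k * w i a) x = k * lsum w x.
Proof.
rewrite /lsum mulr_sumr; apply: eq_bigr => i _.
by rewrite mulr_sumr; apply: eq_bigr => a _; rewrite mulrA.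
Qed.

End FlowVectors.

Section CVProblem.
Variables (R : realType) (L : nat) (b t : 'I_L -> 'I_L -> R) (p c Rc : R).
Hypotheses (hb : forall i j, 0 <= b i j) (hbi : forall i, 0 < brate b i)
  (ht : forall i j, i != j -> 0 < t i j) (ht0 : forall i, t i i = 0)
  (hc : 0 <= c) (hR0 : 0 < Rc) (hR1 : Rc < 1).

Local Notation revenue := (lsum (rC b t p c Rc)).
Local Notation drive_time := (lsum (tau_dr b t)).
Local Notation commission := (lsum (rC2P b t p Rc)).

Lemma qm_ge0 i j : 0 <= qm b i j.
Proof. by rewrite divr_ge0 // ltW. Qed.

Lemma t_ge0 i a : 0 <= t i a.
Proof. by have [->|/ht/ltW //] := eqVneq i a; rewrite ht0. Qed.

Lemma tau_dr_ge0 : nonneg_mx (tau_dr b t).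
Proof.
move=> i a; rewrite addr_ge0 ?t_ge0 //.
by apply: sumr_ge0 => j _; rewrite mulr_ge0 ?qm_ge0 ?t_ge0.
Qed.

Lemma cv_obj_pos N x :
  0 < revenue x -> cv_obj b t p c Rc N x = (N * ln (revenue x) - drive_time x)%:E.
Proof. by rewrite /cv_obj /= => ->. Qed.

Lemma cv_obj_nonpos N x : revenue x <= 0 -> cv_obj b t p c Rc N x = -oo%E.
Proof. by rewrite /cv_obj /= ltNge => ->. Qed.

Lemma compact_cv_feasible bC :
  compact [set v : 'rV[R]_(L * L) | cv_feasible b bC (fun_of_vec v)].
Proof.
have cx := @continuous_fun_of_vec R L.
have closed_feasible : closed [set v | cv_feasible b bC (fun_of_vec v)].
  apply: closedI; [|apply: closedI].
  - do 2!apply: closed_forall => ?.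
    apply: closed_le_fun; [exact: cst_continuous | exact: cx].
  - apply: closed_forall => i; apply: closed_eq_fun; apply: continuous_sumr => j.
      move=> v; apply: (@continuousM _ _ _ (fun=> qm b j i)); last exact: cst_continuous.
      by apply: continuous_sumr => k; exact: cx.
    exact: cx.
  - apply: closed_forall => i; apply: closed_le_fun; last exact: cst_continuous.
    by apply: continuous_sumr => j; exact: cx.
set B := \sum_(a < L) `|bC a|.
have box : compact [set v : 'rV[R]_(L * L) | forall k, `[0, B]%classic (v ord0 k)].
  by apply: (rV_compact (A := fun=> `[0, B]%classic)) => _; exact: segment_compact.
apply: (subclosed_compact closed_feasible box) => v [x_ge0 [_ cap]] k.
case: (mxvec_indexP k) => i a.
rewrite /= in_itv /= (x_ge0 i a) /=.
have row_le : fun_of_vec v i a <= \sum_(j < L) fun_of_vec v j a.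
  by rewrite (bigD1 i) //= lerDl sumr_ge0.
have cap_le : bC a <= B.
  by apply: le_trans (ler_norm _) _; rewrite /B (bigD1 a) //= lerDl sumr_ge0.
exact: le_trans row_le (le_trans (cap a) cap_le).
Qed.

Lemma cv_optimal_exists N bC x0 :
  0 < N -> cv_feasible b bC x0 -> 0 < revenue x0 ->
  exists x, cv_optimal b t p c Rc N bC x.
Proof.
move=> N_gt0 fx0 Sx0.
have [|||v fv [Sv vmax]] := ln_objective_attains_max (x0 := vec_of_fun x0)
  (compact_cv_feasible (bC := bC)) (continuous_lsum (w := rC b t p c Rc))
  (continuous_lsum (w := tau_dr b t)) N_gt0.
- by move=> v [xv _]; exact: lsum_ge0 tau_dr_ge0 xv.
- by rewrite /= vec_of_funK.
- by rewrite vec_of_funK.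
exists (fun_of_vec v); split => // y fy; rewrite (cv_obj_pos _ Sv).
have [Sy|Sy] := leP (revenue y) 0; first by rewrite cv_obj_nonpos ?leNye.
rewrite cv_obj_pos // lee_fin; have := vmax (vec_of_fun y).
by rewrite vec_of_funK; apply => //=; rewrite vec_of_funK.
Qed.

Lemma cv_optimal_nonpos N N' bC x :
  cv_optimal b t p c Rc N bC x -> revenue x <= 0 -> cv_optimal b t p c Rc N' bC x.
Proof.
move=> [fx xopt] Sx; split => // y fy.
have Sy : revenue y <= 0.
  rewrite leNgt; apply/negP => Sy; have := xopt y fy.
  by rewrite (cv_obj_nonpos _ Sx) (cv_obj_pos _ Sy) leeNy_eq.
by rewrite !cv_obj_nonpos.
Qed.

Lemma commission_identity x :
  (1 - Rc) * commission x = Rc * (revenue x + c * drive_time x).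
Proof.
rewrite -!lsumZ -lsumD -lsumZ; congr lsum; apply/funext => i; apply/funext => a.
by rewrite /rC2P /rC; ring.
Qed.

Lemma commission_le x y :
  revenue x <= revenue y -> drive_time x <= drive_time y -> commission x <= commission y.
Proof.
move=> Sxy Txy; have Rc1 : 0 < 1 - Rc by rewrite subr_gt0.
by rewrite -(ler_pM2l Rc1) !commission_identity ler_pM2l // lerD // ler_wpM2l.
Qed.

Lemma cv_optimal_commission_mono N1 N2 bC x1 :
  0 < N1 -> N1 <= N2 -> cv_optimal b t p c Rc N1 bC x1 ->
  exists2 x2, cv_optimal b t p c Rc N2 bC x2 & commission x1 <= commission x2.
Proof.
move=> N1_gt0 N12 opt1.
have [Sx1|Sx1] := leP (revenue x1) 0.
  by exists x1 => //; exact: cv_optimal_nonpos opt1 Sx1.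
have [<-|N12'] := eqVneq N1 N2; first by exists x1.
have [x2 opt2] := cv_optimal_exists (lt_le_trans N1_gt0 N12) opt1.1 Sx1.
exists x2 => //.
have o2 := opt2.2 x1 opt1.1; have o1 := opt1.2 x2 opt2.1.
have Sx2 : 0 < revenue x2.
  by rewrite ltNge; apply/negP => Sx2; move: o2; rewrite cv_obj_pos // cv_obj_nonpos.
move: o1 o2; rewrite !cv_obj_pos // !lee_fin => o1 o2.
have [] := ln_objective_maximisers_mono N1_gt0 _ Sx1 Sx2 o1 o2.
  by rewrite lt_neqAle N12' N12.
exact: commission_le.
Qed.

End CVProblem.

Lemma opt_feasible_le (R : realType) (L : nat) (b t : 'I_L -> 'I_L -> R) M1 M2 bC xA :
  M1 <= M2 -> opt_feasible b t M1 bC xA -> opt_feasible b t M2 bC xA.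
Proof. by move=> M12 [? [? [? [? TM]]]]; do 4!split => //; exact: le_trans TM M12. Qed.

Theorem lemma2 (R : realType) (L : nat) (b t : 'I_L -> 'I_L -> R) (p c Rc : R)
  (hb : forall i j, 0 <= b i j)
  (hbi : forall i, 0 < brate b i)
  (ht : forall i j, i != j -> 0 < t i j)
  (ht0 : forall i, t i i = 0)
  (hp : 0 < p) (hc : 0 <= c) (hR0 : 0 < Rc) (hR1 : Rc < 1) :
  (forall N M1 M2, 0 < N -> 0 <= M1 -> M1 <= M2 ->
     (opt_value b t p c Rc M1 N <= opt_value b t p c Rc M2 N)%E) /\
  (forall M N1 N2, 0 <= M -> 0 < N1 -> N1 <= N2 ->
     (opt_value b t p c Rc M N1 <= opt_value b t p c Rc M N2)%E).
Proof.
split=> [N M1 M2 _ _ M12 | M N1 N2 _ N1_gt0 N12].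
  apply: ereal_sup_le => _ [bC [xA [xC [fA [optC ->]]]]].
  by exists bC, xA, xC; split => //; exact: opt_feasible_le fA.
apply: ge_ereal_sup => _ [bC [xA [xC [fA [optC ->]]]]].
have [x2 opt2 le12] :=
  cv_optimal_commission_mono hb hbi ht ht0 hc hR0 hR1 N1_gt0 N12 optC.
apply: le_trans (ereal_sup_ubound _); last by exists bC, xA, x2.
by rewrite lee_fin lerD2l.
Qed.
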